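(* Let $(T,\to)$ be a countable tournament such that $\mathrm{Aut}(T,\to)$ is transitive on $T$ and transitive on the set of arcs $\{(x,y): x\to y\}$. Suppose that for each vertex $x$, the 3-cycle $C_3$ embeds in the subtournament induced on $x^+=\{y: x\to y\}$. Then $C_3$ embeds in the subtournament induced on $x^-=\{y:y\to x\}$ for each vertex $x$.
   Context: A tournament is a digraph in which for any distinct $x,y$ exactly one of $x\to y$, $y\to x$ holds. $C_3$ denotes the tournament on $\{a,b,c\}$ with $a\to b\to c\to a$. *)

From mathcomp Require Import all_boot.
Set Implicit Arguments. Unset Strict Implicit. Unset Printing Implicit Defensive.

Definition is_tournament (T : Type) (arc : T -> T -> Prop) : Prop :=
  (forall x, ~ arc x x) /\
  (forall x y, x <> y -> (arc x y \/ arc y x) /\ ~ (arc x y /\ arc y x)).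

Definition countable_type (T : Type) : Prop :=
  exists g : T -> nat, injective g.

Definition is_automorphism (T : Type) (arc : T -> T -> Prop) (f : T -> T) : Prop :=
  bijective f /\ (forall x y, arc x y <-> arc (f x) (f y)).

Definition vertex_transitive (T : Type) (arc : T -> T -> Prop) : Prop :=
  forall x y : T, exists f, is_automorphism arc f /\ f x = y.

Definition arc_transitive (T : Type) (arc : T -> T -> Prop) : Prop :=
  forall x y x' y' : T, arc x y -> arc x' y' ->
    exists f, is_automorphism arc f /\ f x = x' /\ f y = y'.

Definition C3_arc (i j : 'I_3) : Prop := (nat_of_ord j = (i.+1 %% 3))%N.

Definition C3_embeds_in (T : Type) (arc : T -> T -> Prop) (S : T -> Prop) : Prop :=
  exists f : 'I_3 -> T, injective f /\ (forall i, S (f i)) /\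
    (forall i j, arc (f i) (f j) <-> C3_arc i j).

Definition out_nbhd (T : Type) (arc : T -> T -> Prop) (x : T) : T -> Prop :=
  fun y => arc x y.
Definition in_nbhd (T : Type) (arc : T -> T -> Prop) (x : T) : T -> Prop :=
  fun y => arc y x.

(* Take a 3-cycle a -> b -> c -> a in the out-neighbourhood of some vertex x.
   An automorphism sending the arc (a, b) to the arc (x, a) sends c to a vertex
   w with a -> w -> x. Comparing w with b and then with c, one of the 3-cycles
   (w, x, a), (w, x, b), (a, b, c) lies in the in-neighbourhood of b, c or w
   respectively. Vertex transitivity then moves this in-neighbourhood to any
   vertex. *)

From mathcomp Require Import all_boot.
Set Implicit Arguments. Unset Strict Implicit. Unset Printing Implicit Defensive.

Lemma C3_arc_total (i j : 'I_3) : i <> j -> C3_arc i j \/ C3_arc j i.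
Proof.
by case: i j => [[|[|[|i]]] Hi] // [[|[|[|j]]] Hj] //= neq_ij;
  rewrite /C3_arc /=; auto; case: neq_ij; apply/val_inj.
Qed.

Section Tournament.
Variables (T : Type) (arc : T -> T -> Prop).
Hypothesis tour : is_tournament arc.

Lemma arc_irrefl x : ~ arc x x.
Proof. by case: tour. Qed.

Lemma arc_asym x y : arc x y -> ~ arc y x.
Proof.
move=> xy yx; have neq_xy : x <> y by move=> eq_xy; subst; exact: (arc_irrefl xy).
by case: tour => _ /(_ x y neq_xy) [_]; apply.
Qed.

Lemma arc_compare x y z : arc x y -> arc y z -> arc x z \/ arc z x.
Proof.
move=> xy yz; have neq_xz : x <> z by move=> eq_xz; subst; exact: (arc_asym xy).
by case: tour => _ /(_ x z neq_xz) [].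
Qed.

Definition C3_cycle_in (S : T -> Prop) :=
  exists p q r, [/\ arc p q, arc q r & arc r p] /\ [/\ S p, S q & S r].

Lemma C3_embedsP S : C3_embeds_in arc S <-> C3_cycle_in S.
Proof.
split=> [[f [_ [inS f_arc]]] | [p [q [r [[pq qr rp] [Sp Sq Sr]]]]]].
  exists (f (@Ordinal 3 0 isT)), (f (@Ordinal 3 1 isT)), (f (@Ordinal 3 2 isT)).
  by split; split=> //; apply/f_arc.
pose f (i : 'I_3) := nth p [:: p; q; r] i.
have f_arc i j : arc (f i) (f j) <-> C3_arc i j.
  case: i j => [[|[|[|i]]] Hi] // [[|[|[|j]]] Hj] //; rewrite /f /C3_arc /=;
    split=> // a; by [case: (arc_irrefl a) | case: (arc_asym a)].
exists f; split; last by split=> // -[[|[|[|i]]] Hi].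
(* Distinct vertices of C_3 are joined by an arc, which f preserves. *)
move=> i j eq_f; apply/eqP/negPn/negP => /eqP/C3_arc_total.
by case=> /f_arc; rewrite eq_f => /arc_irrefl.
Qed.

Lemma automorphism_arc f x y : is_automorphism arc f -> arc x y -> arc (f x) (f y).
Proof. by case=> _ /(_ x y) []. Qed.

Lemma C3_cycle_in_automorphism f (S S' : T -> Prop) :
  is_automorphism arc f -> (forall y, S y -> S' (f y)) ->
  C3_cycle_in S -> C3_cycle_in S'.
Proof.
move=> autf SS' [p [q [r [[pq qr rp] [Sp Sq Sr]]]]].
by exists (f p), (f q), (f r); split; split; auto; apply: automorphism_arc.
Qed.

Lemma C3_in_nbhd_transport x y :
  vertex_transitive arc ->
  C3_cycle_in (in_nbhd arc x) -> C3_cycle_in (in_nbhd arc y).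
Proof.
move=> vtrans; have [f [autf fx]] := vtrans x y.
apply: (C3_cycle_in_automorphism autf) => z zx.
by rewrite /in_nbhd -fx; apply: automorphism_arc.
Qed.

Lemma C3_in_nbhd_of_out_nbhd x :
  arc_transitive arc ->
  C3_cycle_in (out_nbhd arc x) -> exists v, C3_cycle_in (in_nbhd arc v).
Proof.
move=> atrans [a [b [c [[ab bc ca] [xa xb xc]]]]].
have [f [autf [fa fb]]] := atrans a b x a ab xa.
set w := f c.
have aw : arc a w by rewrite -fb; apply: automorphism_arc.
have wx : arc w x by rewrite -fa; apply: automorphism_arc.
have [wb|bw] := arc_compare wx xb.
  by exists b, w, x, a.
have [wc|cw] := arc_compare wx xc.
  by exists c, w, x, b.
by exists w, a, b, c.
Qed.

End Tournament.

Theorem lemma3p4 (T : Type) (arc : T -> T -> Prop) :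
  is_tournament arc ->
  countable_type T ->
  vertex_transitive arc ->
  arc_transitive arc ->
  (forall x : T, C3_embeds_in arc (out_nbhd arc x)) ->
  forall x : T, C3_embeds_in arc (in_nbhd arc x).
Proof.
move=> tour _ vtrans atrans C3_out x.
have /(C3_embedsP tour) C3_out_x := C3_out x.
have [v C3_in_v] := C3_in_nbhd_of_out_nbhd tour atrans C3_out_x.
by apply/(C3_embedsP tour); apply: C3_in_nbhd_transport C3_in_v.
Qed.
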